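(* Let $0<r^0<r^1$. There exists $\sigma_0\in(0,1)$ such that, for given $\gamma>1$, $p_b^+(r_b)>0$, $\rho_b^+(r_b)>0$ and $t(r_b)=(M_b^+)^2(r_b)\in(0,\sigma_0)$, there exists $r_*\in(r^0,r^1)$ so that the background solution determined by $\gamma$, $r_b\in(r_*,r^1)$, $p_b^+(r_b)$, $\rho_b^+(r_b)$ and $t(r_b)$ satisfies the S-Condition.
   Context: Radial flows $U=(p,\rho,u^0\partial_r)$ of a polytropic gas ($c^2=\gamma p/\rho$) satisfy $\frac{du^0}{dr}=\frac{2c^2u^0}{r((u^0)^2-c^2)}$, $\frac{d\rho}{dr}=-\frac{2\rho(u^0)^2}{r((u^0)^2-c^2)}$, $\frac{dp}{dr}=-\frac{2\rho c^2(u^0)^2}{r((u^0)^2-c^2)}$. The (subsonic part $U_b^+$ of the) background solution determined by $(\gamma,r_b,p_b^+(r_b),\rho_b^+(r_b),t(r_b))$, with $r_b\in(r^0,r^1)$, $t(r_b)\in(0,1)$, is the radial solution on $[r_b,r^1]$ with $p=p_b^+(r_b)$, $\rho=\rho_b^+(r_b)$, $(u^0)^2=t(r_b)c^2>0$ at $r=r_b$; it is subsonic, $M_b^+=(u^0)_b^+/c_b^+$ and $t(r)=(M_b^+)^2(r)$. S-Condition. Put $t_s=t(r_b)$ and (quantities evaluated at $r_b$) $\mu_0=\frac{\gamma+1}{2}\frac{((u^0)_b^+)^2}{(c^2-(u^0)^2)_b^+}$, $\mu_2=-\frac{4\rho_b^+}{(\gamma+1)r_b}((\gamma-1)(u^0)^2+c^2)_b^+$,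 $\mu_5=\frac{r_b^2((u^0)^2-c^2)_b^+}{\gamma p_b^+(u^0)_b^+}$, $\mu_6=\frac{8\gamma(u^0)_b^+(r_b)}{(\gamma+1)(1-t_s)}((\gamma-1)t_s^2+t_s+1)$, $\mu_7=-\mu_0\mu_6$, $\mu_9=-\mu_0\mu_2\mu_5$. With $t=t(r)$ define $e_1=r^2(1-t)$, $e_2=\frac{2r}{1-t}((1+2\gamma)t^2-3t+4)$, $e_3=\frac{-2}{(t-1)^3}(6-19t-7t^2(\gamma-2)+t^4\gamma(1+2\gamma)+t^3(-3+2\gamma-4\gamma^2))$, $e_4=\frac{1-t_s}{(\rho_b^+(r_b))^\gamma(1+(\gamma-1)t_s)}\cdot\frac{2(\rho_b^+(r))^\gamma(2+(\gamma-1)t)}{(1-t)^3}((2\gamma-3)t^2+8t-3)$. For $\lambda_n=n(n+1)$, $n\ge0$, consider on $y\in[0,1]$, with $e_i$ evaluated at $r=(r^1-r_b)y+r_b$: $e_1v''+(r^1-r_b)e_2v'+(r^1-r_b)^2(e_3-\lambda_n)v=-(r^1-r_b)^2e_4$, $v(0)=1$, $v(1)=0$, $v'(0)=-\frac{\lambda_n+\mu_7}{\mu_9}(r^1-r_b)$. The background solution satisfies the S-Condition if for every $n\ge0$ this problem has no solution. *)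

From Stdlib Require Import Reals Lra.
Open Scope R_scope.

Definition deriv_on (a b : R) (f f' : R -> R) : Prop :=
  forall x, a <= x <= b -> forall eps, 0 < eps ->
    exists delta, 0 < delta /\
      forall h, h <> 0 -> Rabs h < delta -> a <= x + h <= b ->
        Rabs ((f (x + h) - f x) / h - f' x) < eps.

Definition csq (gam pr rho : R) : R := gam * pr / rho.

(* (p, rho, u^0) on [rb, r1] is the (subsonic part of the) background solution
   determined by (gam, rb, pb, rhob, ts): a classical solution of the radial
   ODE system with p = pb, rho = rhob, (u^0)^2 = ts c^2, u^0 > 0 at r = rb. *)
Definition background_solution (gam rb r1 pb rhob ts : R)
  (p rho u : R -> R) : Prop :=
  exists p' rho' u' : R -> R,
    deriv_on rb r1 p p' /\ deriv_on rb r1 rho rho' /\ deriv_on rb r1 u u' /\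
    (forall r, rb <= r <= r1 ->
       let c2 := csq gam (p r) (rho r) in
       0 < p r /\ 0 < rho r /\ u r ^ 2 - c2 <> 0 /\
       u' r = 2 * c2 * u r / (r * (u r ^ 2 - c2)) /\
       rho' r = - (2 * rho r * u r ^ 2) / (r * (u r ^ 2 - c2)) /\
       p' r = - (2 * rho r * c2 * u r ^ 2) / (r * (u r ^ 2 - c2))) /\
    p rb = pb /\ rho rb = rhob /\ 0 < u rb /\
    u rb ^ 2 = ts * csq gam (p rb) (rho rb).

Definition tfun (gam : R) (p rho u : R -> R) (r : R) : R :=
  u r ^ 2 / csq gam (p r) (rho r).

Section Coeffs.
Variables (gam rb r1 ts : R) (p rho u : R -> R).

Let u0 := u rb.
Let c2b := csq gam (p rb) (rho rb).
Let pb := p rb.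
Let rhob := rho rb.

Definition mu0 : R := (gam + 1) / 2 * (u0 ^ 2 / (c2b - u0 ^ 2)).
Definition mu2 : R :=
  - (4 * rhob / ((gam + 1) * rb)) * ((gam - 1) * u0 ^ 2 + c2b).
Definition mu5 : R := rb ^ 2 * (u0 ^ 2 - c2b) / (gam * pb * u0).
Definition mu6 : R :=
  8 * gam * u0 / ((gam + 1) * (1 - ts)) * ((gam - 1) * ts ^ 2 + ts + 1).
Definition mu7 : R := - mu0 * mu6.
Definition mu9 : R := - mu0 * mu2 * mu5.

Definition e1 (r : R) : R :=
  let t := tfun gam p rho u r in r ^ 2 * (1 - t).
Definition e2 (r : R) : R :=
  let t := tfun gam p rho u r in
  2 * r / (1 - t) * ((1 + 2 * gam) * t ^ 2 - 3 * t + 4).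
Definition e3 (r : R) : R :=
  let t := tfun gam p rho u r in
  -2 / (t - 1) ^ 3 *
  (6 - 19 * t - 7 * t ^ 2 * (gam - 2) + t ^ 4 * gam * (1 + 2 * gam)
   + t ^ 3 * (-3 + 2 * gam - 4 * gam ^ 2)).
Definition e4 (r : R) : R :=
  let t := tfun gam p rho u r in
  (1 - ts) / (Rpower rhob gam * (1 + (gam - 1) * ts)) *
  (2 * Rpower (rho r) gam * (2 + (gam - 1) * t) / (1 - t) ^ 3 *
   ((2 * gam - 3) * t ^ 2 + 8 * t - 3)).

End Coeffs.

Definition lam (n : nat) : R := INR n * (INR n + 1).

Definition S_condition (gam rb r1 ts : R) (p rho u : R -> R) : Prop :=
  let L := r1 - rb in
  let E1 := e1 gam p rho u in
  let E2 := e2 gam p rho u in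
  let E3 := e3 gam p rho u in
  let E4 := e4 gam rb ts p rho u in
  forall n : nat,
    ~ (exists v v1 v2 : R -> R,
         deriv_on 0 1 v v1 /\ deriv_on 0 1 v1 v2 /\
         (forall y, 0 <= y <= 1 ->
            let r := L * y + rb in
            E1 r * v2 y + L * E2 r * v1 y + L ^ 2 * (E3 r - lam n) * v y
            = - L ^ 2 * E4 r) /\
         v 0 = 1 /\ v 1 = 0 /\
         v1 0 = - ((lam n + mu7 gam rb ts p rho u)
                   / mu9 gam rb p rho u) * L).

(* A subsonic background with t(r_b) <= 1/2 keeps t <= t(r_b) on [r_b, r^1], since
   rho (u^2 - t(r_b) c^2) vanishes at r_b and is nonincreasing; if moreover L = r^1 - r_b < r_b / 4,
   then rho <= 2 rho_b.  Hence e_1 >= r^2 / 2 and e_2, e_3, e_4 are bounded independently of r_b,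
   mu_7 does not depend on r_b, and mu_9 = -2 r_b u^0(r_b) (1 + (gamma - 1) t(r_b)) < 0.
   For large lambda_n the initial slope v'(0) is positive and v' cannot vanish (at a first zero,
   v >= 1 and v'' <= 0 contradict the equation), so v(1) > v(0) = 1.  For the finitely many other
   lambda_n, v'(0) = O(L) and v'' = O(L) as long as |v'| <= 1/2, so for small L the slope stays
   below 1/2 and v(1) >= 1/2.  Either way v(1) = 0 is impossible. *)

From Stdlib Require Import Reals Lra.
Open Scope R_scope.

Definition diff_quot (f : R -> R) (x h : R) : R := (f (x + h) - f x) / h.

Definition admissible_incr (a b x h : R) : Prop := h <> 0 /\ a <= x + h <= b.

Lemma deriv_on_limit a b f f' :
  deriv_on a b f f' <->
  forall x, a <= x <= b -> limit1_in (diff_quot f x) (admissible_incr a b x) (f' x) 0.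
Proof.
  unfold deriv_on, limit1_in, limit_in, admissible_incr, diff_quot; simpl; unfold R_dist.
  split; intros H x Hx eps Heps; destruct (H x Hx eps Heps) as [d [Hd Hlim]];
    exists d; split; try lra.
  - intros h [[Hh0 Hh1] Hh2]. rewrite Rminus_0_r in Hh2. auto.
  - intros h Hh0 Hh1 Hh2. apply Hlim. rewrite Rminus_0_r. auto.
Qed.

Lemma limit1_in_ext f g D l x0 :
  (forall x, D x -> f x = g x) -> limit1_in f D l x0 -> limit1_in g D l x0.
Proof.
  unfold limit1_in, limit_in; intros Efg H eps Heps.
  destruct (H eps Heps) as [d [Hd Hlim]]. exists d; split; auto.
  intros x [Dx Hx]. rewrite <- Efg by auto. auto.
Qed.

Lemma deriv_on_ext a b f g f' g' :
  (forall x, a <= x <= b -> f x = g x) -> (forall x, a <= x <= b -> f' x = g' x) ->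
  deriv_on a b f f' -> deriv_on a b g g'.
Proof.
  intros Efg Ef'g' H x Hx eps Heps. destruct (H x Hx eps Heps) as [d [Hd Hlim]].
  exists d; split; auto. intros h Hh0 Hh1 Hh2.
  rewrite <- !Efg, <- Ef'g' by lra. auto.
Qed.

Lemma deriv_on_restrict a b a' b' f f' :
  a <= a' -> b' <= b -> deriv_on a b f f' -> deriv_on a' b' f f'.
Proof.
  intros Ha Hb H x Hx eps Heps. destruct (H x ltac:(lra) eps Heps) as [d [Hd Hlim]].
  exists d; split; auto. intros h Hh0 Hh1 Hh2. apply Hlim; auto; lra.
Qed.

Lemma deriv_on_limit_shift a b f f' x :
  deriv_on a b f f' -> a <= x <= b ->
  limit1_in (fun h => f (x + h)) (admissible_incr a b x) (f x) 0.
Proof.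
  intros Hf Hx. rewrite deriv_on_limit in Hf.
  pose proof (limit_plus _ _ _ _ _ _ (limit_free (fun _ => f x) (admissible_incr a b x) 0 0)
    (limit_mul _ _ _ _ _ _ (lim_x (admissible_incr a b x) 0) (Hf x Hx))) as H.
  rewrite Rmult_0_l, Rplus_0_r in H.
  eapply limit1_in_ext; [|exact H]; intros h [Hh _]; cbv beta; unfold diff_quot. field. auto.
Qed.

Lemma deriv_on_mult a b f f' g g' :
  deriv_on a b f f' -> deriv_on a b g g' ->
  deriv_on a b (fun x => f x * g x) (fun x => f' x * g x + f x * g' x).
Proof.
  intros Hf Hg. apply deriv_on_limit. intros x Hx.
  pose proof (deriv_on_limit_shift _ _ _ _ x Hf Hx) as Hs.
  rewrite deriv_on_limit in Hf, Hg.
  pose proof (limit_plus _ _ _ _ _ _ (limit_mul _ _ _ _ _ _ Hs (Hg x Hx))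
    (limit_mul _ _ _ _ _ _ (limit_free (fun _ => g x) (admissible_incr a b x) 0 0) (Hf x Hx))) as H.
  replace (f' x * g x + f x * g' x) with (f x * g' x + g x * f' x) by ring.
  eapply limit1_in_ext; [|exact H]; intros h [Hh _]; cbv beta; unfold diff_quot. field. auto.
Qed.

Lemma deriv_on_plus_scal a b f f' g g' c :
  deriv_on a b f f' -> deriv_on a b g g' ->
  deriv_on a b (fun x => f x + c * g x) (fun x => f' x + c * g' x).
Proof.
  intros Hf Hg. apply deriv_on_limit. intros x Hx. rewrite deriv_on_limit in Hf, Hg.
  pose proof (limit_plus _ _ _ _ _ _ (Hf x Hx)
    (limit_mul _ _ _ _ _ _ (limit_free (fun _ => c) (admissible_incr a b x) 0 0) (Hg x Hx))) as H.
  eapply limit1_in_ext; [|exact H]; intros h [Hh _]; cbv beta; unfold diff_quot. field. auto.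
Qed.

Lemma deriv_on_const a b c : deriv_on a b (fun _ => c) (fun _ => 0).
Proof.
  intros x _ eps Heps. exists 1; split; [lra|]. intros h Hh _ _.
  replace ((c - c) / h - 0) with 0 by (field; auto). rewrite Rabs_R0. lra.
Qed.

Lemma deriv_on_id a b : deriv_on a b (fun x => x) (fun _ => 1).
Proof.
  intros x _ eps Heps. exists 1; split; [lra|]. intros h Hh _ _.
  replace ((x + h - x) / h - 1) with 0 by (field; auto). rewrite Rabs_R0. lra.
Qed.

Definition cont_on (a b : R) (f : R -> R) : Prop :=
  forall x, a <= x <= b -> forall eps, 0 < eps -> exists delta, 0 < delta /\
    forall y, a <= y <= b -> Rabs (y - x) < delta -> Rabs (f y - f x) < eps.

Lemma deriv_on_cont a b f f' : deriv_on a b f f' -> cont_on a b f.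
Proof.
  intros Hf x Hx eps Heps.
  destruct (deriv_on_limit_shift _ _ _ _ x Hf Hx eps Heps) as [d [Hd Hlim]].
  simpl in Hlim; unfold R_dist in Hlim. exists d; split; [lra|].
  intros y Hy Hyx. destruct (Req_dec y x) as [->|Hne].
  - unfold Rminus; rewrite Rplus_opp_r, Rabs_R0; lra.
  - replace y with (x + (y - x)) by ring. apply Hlim. unfold admissible_incr.
    rewrite Rminus_0_r. repeat split; auto; lra.
Qed.

Lemma cont_on_abs a b f : cont_on a b f -> cont_on a b (fun x => Rabs (f x)).
Proof.
  intros H x Hx eps Heps. destruct (H x Hx eps Heps) as [d [Hd Hlim]].
  exists d; split; auto. intros y Hy Hyx.
  eapply Rle_lt_trans; [apply Rabs_triang_inv2|auto].
Qed.

Lemma cont_on_opp a b f : cont_on a b f -> cont_on a b (fun x => - f x).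
Proof.
  intros H x Hx eps Heps. destruct (H x Hx eps Heps) as [d [Hd Hlim]].
  exists d; split; auto. intros y Hy Hyx.
  replace (- f y - - f x) with (- (f y - f x)) by ring. rewrite Rabs_Ropp. auto.
Qed.

Lemma cont_on_first_hit a b f M :
  a <= b -> cont_on a b f -> f a < M -> (exists x, a <= x <= b /\ M <= f x) ->
  exists c, a < c <= b /\ f c = M /\ forall s, a <= s < c -> f s < M.
Proof.
  intros Hab Hf Ha [x [Hx Hfx]].
  (* [c] is the infimum of the hitting set, obtained as [- sup] of its reflection *)
  set (E := fun y => a <= - y <= b /\ M <= f (- y)).
  assert (HEx : E (- x)) by (unfold E; rewrite Ropp_involutive; split; [lra|auto]).
  assert (HB : bound E) by (exists (- a); intros y [Hy _]; lra).
  destruct (completeness E HB (ex_intro _ _ HEx)) as [m [Hub Hlub]].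
  set (c := - m).
  assert (Hcx : c <= x) by (specialize (Hub _ HEx); unfold c; lra).
  assert (Hac : a <= c) by (assert (m <= - a) by (apply Hlub; intros y [Hy _]; lra); unfold c; lra).
  assert (Hbefore : forall s, a <= s < c -> f s < M).
  { intros s Hs. destruct (Rlt_or_le (f s) M) as [|Hge]; auto. exfalso.
    assert (E (- s)) by (unfold E; rewrite Ropp_involutive; split; [lra|auto]).
    specialize (Hub _ H). unfold c in Hs; lra. }
  assert (Hge : M <= f c).
  { destruct (Rlt_or_le (f c) M) as [Hlt|]; auto. exfalso.
    destruct (Hf c ltac:(lra) (M - f c) ltac:(lra)) as [d [Hd Hcont]].
    assert (m <= m - d); [|lra].
    apply Hlub. intros y [Hy Hfy].
    destruct (Rlt_or_le (- y) c); [specialize (Hbefore (- y) ltac:(lra)); lra|].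
    destruct (Rlt_or_le (- y) (c + d)) as [Hnear|]; [|unfold c in *; lra].
    assert (Hdist : Rabs (- y - c) < d) by (rewrite Rabs_right; lra).
    specialize (Hcont _ Hy Hdist). pose proof (Rle_abs (f (- y) - f c)). lra. }
  assert (Hlt : a < c) by (destruct (Req_dec a c) as [Eac|]; [rewrite <- Eac in Hge; lra|lra]).
  assert (Hle : f c <= M).
  { destruct (Rlt_or_le M (f c)) as [Hgt|]; auto. exfalso.
    destruct (Hf c ltac:(lra) (f c - M) ltac:(lra)) as [d [Hd Hcont]].
    set (s := Rmax a (c - d / 2)).
    assert (a <= s) by apply Rmax_l. assert (c - d / 2 <= s) by apply Rmax_r.
    assert (s < c) by (apply Rmax_lub_lt; lra).
    assert (Hdist : Rabs (s - c) < d) by (rewrite Rabs_left; lra).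
    specialize (Hcont s ltac:(lra) Hdist). specialize (Hbefore s ltac:(lra)).
    pose proof (Rle_abs (- (f s - f c))) as Habs. rewrite Rabs_Ropp in Habs. lra. }
  exists c. repeat split; auto; lra.
Qed.

Lemma deriv_on_nonneg_at_left_max a b f f' c :
  deriv_on a b f f' -> a < c <= b -> (forall s, a <= s < c -> f s <= f c) -> 0 <= f' c.
Proof.
  intros Hf Hc Hmax. destruct (Rle_or_lt 0 (f' c)) as [|Hneg]; auto. exfalso.
  destruct (Hf c ltac:(lra) (- f' c) ltac:(lra)) as [d [Hd Hquot]].
  set (h := - (Rmin d (c - a) / 2)).
  assert (Rmin d (c - a) <= d) by apply Rmin_l.
  assert (Rmin d (c - a) <= c - a) by apply Rmin_r.
  assert (0 < Rmin d (c - a)) by (apply Rmin_glb_lt; lra).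
  assert (Hh : Rabs h < d) by (rewrite Rabs_left; unfold h; lra).
  specialize (Hquot h ltac:(unfold h; lra) Hh ltac:(unfold h; lra)).
  specialize (Hmax (c + h) ltac:(unfold h; lra)).
  assert (0 <= (f (c + h) - f c) / h).
  { replace ((f (c + h) - f c) / h) with ((f c - f (c + h)) / - h) by (field; unfold h; lra).
    apply Rmult_le_pos; [lra|]. left; apply Rinv_0_lt_compat; unfold h; lra. }
  pose proof (Rle_abs ((f (c + h) - f c) / h - f' c)). lra.
Qed.

Lemma mean_value_ub a b f f' K :
  deriv_on a b f f' -> (forall x, a <= x <= b -> f' x <= K) ->
  forall x, a <= x <= b -> f x - f a <= K * (x - a).
Proof.
  intros Hf HK x Hx. destruct (Rle_or_lt (f x - f a) (K * (x - a))) as [|Hgt]; auto. exfalso.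
  (* tilt [f] by a slope [K + e] slightly above [K]: it still increases from [a] to [x],
     so at its first return to the level reached at [x] its derivative is [>= 0] *)
  set (e := (f x - f a - K * (x - a)) / (x - a + 1)).
  assert (Hxa : a < x) by (destruct (Req_dec a x) as [<-|]; [lra|lra]).
  assert (He : 0 < e) by (apply Rdiv_lt_0_compat; lra).
  set (g := fun y => (f y + (- (K + e)) * y) + 1 * ((K + e) * a - f a)).
  assert (Hg : deriv_on a b g (fun y => (f' y + (- (K + e)) * 1) + 1 * 0)).
  { apply deriv_on_plus_scal; [apply deriv_on_plus_scal; auto; apply deriv_on_id|].
    apply deriv_on_const. }
  assert (Hgx : g a < g x).
  { assert (g x - g a = (f x - f a - K * (x - a)) / (x - a + 1)) by (unfold g, e; field; lra).
    assert (0 < (f x - f a - K * (x - a)) / (x - a + 1)) by (apply Rdiv_lt_0_compat; lra).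
    lra. }
  destruct (cont_on_first_hit a b g (g x) ltac:(lra) (deriv_on_cont _ _ _ _ Hg) Hgx)
    as [c [Hc [Hgc Hbefore]]].
  { exists x; split; auto; lra. }
  pose proof (deriv_on_nonneg_at_left_max a b g _ c Hg Hc
    ltac:(intros s Hs; specialize (Hbefore s Hs); lra)).
  specialize (HK c ltac:(lra)). lra.
Qed.

Lemma mean_value_lb a b f f' K :
  deriv_on a b f f' -> (forall x, a <= x <= b -> K <= f' x) ->
  forall x, a <= x <= b -> K * (x - a) <= f x - f a.
Proof.
  intros Hf HK x Hx.
  assert (Hopp : deriv_on a b (fun y => 0 + (-1) * f y) (fun y => 0 + (-1) * f' y))
    by (apply deriv_on_plus_scal; auto; apply deriv_on_const).
  pose proof (mean_value_ub a b _ _ (- K) Hopp ltac:(intros y Hy; specialize (HK y Hy); lra) x Hx).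
  lra.
Qed.

Lemma Rabs_le_between x B : Rabs x <= B -> - B <= x <= B.
Proof.
  intros H. pose proof (Rle_abs x). pose proof (Rle_abs (- x)). rewrite Rabs_Ropp in *. lra.
Qed.

Lemma mean_value_abs a b f f' K :
  deriv_on a b f f' -> (forall x, a <= x <= b -> Rabs (f' x) <= K) ->
  forall x, a <= x <= b -> Rabs (f x - f a) <= K * (x - a).
Proof.
  intros Hf HK x Hx. apply Rabs_le. split.
  - replace (- (K * (x - a))) with (- K * (x - a)) by ring.
    apply (mean_value_lb a b f f'); auto. intros y Hy. pose proof (Rabs_le_between _ _ (HK y Hy)); lra.
  - apply (mean_value_ub a b f f'); auto. intros y Hy. pose proof (Rabs_le_between _ _ (HK y Hy)); lra.
Qed.

Lemma div_nonpos_of_neg a b : 0 <= a -> b < 0 -> a / b <= 0.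
Proof. intros Ha Hb. assert (/ b < 0) by (apply Rinv_lt_0_compat; lra). unfold Rdiv. nra. Qed.

Section Background.
Variables (gam rb r1 ts : R) (p rho u p' rho' u' : R -> R).
Hypotheses (Hgam : 0 < gam) (Hrb : 0 < rb < r1) (Hts : 0 < ts <= 1 / 2)
  (Hp : deriv_on rb r1 p p') (Hrho : deriv_on rb r1 rho rho') (Hu : deriv_on rb r1 u u').
Hypothesis Hode : forall r, rb <= r <= r1 ->
  let c2 := csq gam (p r) (rho r) in
  0 < p r /\ 0 < rho r /\ u r ^ 2 - c2 <> 0 /\
  u' r = 2 * c2 * u r / (r * (u r ^ 2 - c2)) /\
  rho' r = - (2 * rho r * u r ^ 2) / (r * (u r ^ 2 - c2)) /\
  p' r = - (2 * rho r * c2 * u r ^ 2) / (r * (u r ^ 2 - c2)).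
Hypothesis Hu_rb : u rb ^ 2 = ts * csq gam (p rb) (rho rb).

Let c2 r := csq gam (p r) (rho r).

Lemma background_csq_pos r : rb <= r <= r1 -> 0 < c2 r.
Proof.
  intros Hr. destruct (Hode r Hr) as [Hpr [Hrhor _]].
  apply Rdiv_lt_0_compat; [apply Rmult_lt_0_compat|]; lra.
Qed.

(* [rho (u^2 - k c^2) = rho u^2 - k gam p]: [k = 1] detects sonic points, [k = ts] bounds [t] *)
Let flux k r := rho r * (u r ^ 2 - k * c2 r).

Lemma background_flux_deriv k :
  deriv_on rb r1 (flux k)
    (fun r => 2 * rho r * u r ^ 2 / (r * (u r ^ 2 - c2 r)) * ((2 + k * gam) * c2 r - u r ^ 2)).
Proof.
  pose proof (deriv_on_plus_scal rb r1 _ _ _ _ (- (k * gam))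
    (deriv_on_mult rb r1 _ _ _ _ Hrho (deriv_on_mult rb r1 _ _ _ _ Hu Hu)) Hp) as H.
  refine (deriv_on_ext _ _ _ _ _ _ _ _ H); intros r Hr;
    destruct (Hode r Hr) as [Hpr [Hrhor [Hsonic [Hu' [Hrho' Hp']]]]]; cbv beta zeta in *.
  - unfold flux, c2, csq. field. lra.
  - rewrite Hu', Hrho', Hp'. unfold c2. field. split; [auto|lra].
Qed.

Lemma background_subsonic r : rb <= r <= r1 -> u r ^ 2 < c2 r.
Proof.
  intros Hr. destruct (Hode r Hr) as [_ [Hrhor _]].
  assert (Hflux_rb : flux 1 rb < 0).
  { unfold flux. rewrite Hu_rb. fold (c2 rb).
    pose proof (background_csq_pos rb ltac:(lra)). destruct (Hode rb ltac:(lra)) as [_ [? _]].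
    assert (ts * c2 rb - 1 * c2 rb < 0) by nra. nra. }
  enough (flux 1 r < 0) by (unfold flux in *; nra).
  destruct (Rlt_or_le (flux 1 r) 0) as [|Hge]; auto. exfalso.
  destruct (cont_on_first_hit rb r1 (flux 1) 0 ltac:(lra)
    (deriv_on_cont _ _ _ _ (background_flux_deriv 1)) Hflux_rb) as [c [Hc [Hzero _]]].
  { exists r; auto. }
  destruct (Hode c ltac:(lra)) as [_ [Hrhoc [Hsonic _]]].
  apply Rmult_integral in Hzero as [|Hz]; [lra|]. apply Hsonic. unfold c2 in Hz. lra.
Qed.

Lemma background_speed_sq_le r : rb <= r <= r1 -> u r ^ 2 <= ts * c2 r.
Proof.
  intros Hr. destruct (Hode r Hr) as [_ [Hrhor _]].
  assert (Hflux_rb : flux ts rb = 0) by (unfold flux, c2; rewrite Hu_rb; ring).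
  enough (flux ts r - flux ts rb <= 0 * (r - rb)) by (unfold flux in *; nra).
  apply (mean_value_ub _ _ _ _ 0 (background_flux_deriv ts)); auto. intros x Hx.
  pose proof (background_subsonic x Hx). pose proof (background_csq_pos x Hx).
  destruct (Hode x Hx) as [_ [Hrhox _]].
  assert (2 * rho x * u x ^ 2 / (x * (u x ^ 2 - c2 x)) <= 0)
    by (apply div_nonpos_of_neg; [nra|]; assert (0 < x) by lra; nra).
  assert (0 <= ts * gam * c2 x) by (apply Rmult_le_pos; [nra|lra]).
  assert (0 <= (2 + ts * gam) * c2 x - u x ^ 2) by nra.
  nra.
Qed.

Lemma background_mach_le r : rb <= r <= r1 -> 0 <= tfun gam p rho u r <= ts.
Proof.
  intros Hr. pose proof (background_csq_pos r Hr). pose proof (background_speed_sq_le r Hr).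
  unfold tfun. fold (c2 r). split.
  - unfold Rdiv. apply Rmult_le_pos; [nra|]. left; apply Rinv_0_lt_compat; lra.
  - apply Rmult_le_reg_r with (c2 r); auto. unfold Rdiv. rewrite Rmult_assoc, Rinv_l by lra. nra.
Qed.

Lemma background_density_le : r1 - rb < rb / 4 -> forall r, rb <= r <= r1 -> rho r <= 2 * rho rb.
Proof.
  intros HL r Hr.
  (* while [rho <= 2 rho rb], [t <= 1/2] gives [rho' <= 2 rho / r <= 4 rho rb / rb] *)
  assert (Hslope : forall x, rb <= x <= r1 -> rho x <= 2 * rho rb -> rho' x <= 4 * rho rb / rb).
  { intros x Hx Hrhox. destruct (Hode x Hx) as [_ [Hpos [_ [_ [Hrho' _]]]]]. cbv zeta in Hrho'.
    pose proof (background_csq_pos x Hx). pose proof (background_speed_sq_le x Hx).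
    assert (Hid : rho' x * (x * (c2 x - u x ^ 2)) = 2 * rho x * u x ^ 2).
    { rewrite Hrho'. unfold c2. field. split; [|lra]. unfold c2 in *. nra. }
    assert (Hw : u x ^ 2 <= c2 x - u x ^ 2) by nra.
    assert (0 <= u x ^ 2) by nra.
    assert (Hxw : 0 < x * (c2 x - u x ^ 2)) by (apply Rmult_lt_0_compat; lra).
    assert (Hnn : 0 <= rho' x).
    { apply Rmult_le_reg_r with (x * (c2 x - u x ^ 2)); [lra|]. rewrite Rmult_0_l, Hid. nra. }
    assert (rho' x * x <= 2 * rho x).
    { apply Rmult_le_reg_r with (c2 x - u x ^ 2); [lra|].
      replace (rho' x * x * (c2 x - u x ^ 2)) with (rho' x * (x * (c2 x - u x ^ 2))) by ring.
      rewrite Hid. nra. }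
    apply Rmult_le_reg_r with rb; [lra|]. unfold Rdiv. rewrite Rmult_assoc, Rinv_l by lra. nra. }
  destruct (Rle_or_lt (rho r) (2 * rho rb)) as [|Hgt]; auto. exfalso.
  destruct (Hode rb ltac:(lra)) as [_ [Hrho_rb _]].
  destruct (cont_on_first_hit rb r1 rho (2 * rho rb) ltac:(lra) (deriv_on_cont _ _ _ _ Hrho)
    ltac:(lra)) as [c [Hc [Hrhoc Hbefore]]].
  { exists r; split; [auto|lra]. }
  assert (4 * rho rb / rb * (c - rb) < rho rb).
  { apply Rlt_le_trans with (4 * rho rb / rb * (rb / 4)); [|right; field; lra].
    apply Rmult_lt_compat_l; [apply Rdiv_lt_0_compat|]; lra. }
  assert (rho c - rho rb <= 4 * rho rb / rb * (c - rb)); [|lra].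
  apply (mean_value_ub rb c rho rho'); [apply (deriv_on_restrict rb r1); auto; lra| |lra].
  intros x Hx. apply Hslope; [lra|].
  destruct (Req_dec x c) as [->|]; [lra|]. left; apply Hbefore; lra.
Qed.
End Background.

Lemma background_estimates gam rb r1 pb rhob ts p rho u :
  0 < gam -> 0 < rb < r1 -> r1 - rb < rb / 4 -> 0 < ts <= 1 / 2 ->
  background_solution gam rb r1 pb rhob ts p rho u ->
  forall r, rb <= r <= r1 -> 0 <= tfun gam p rho u r <= ts /\ 0 < rho r <= 2 * rhob.
Proof.
  intros Hgam Hrb HL Hts [p' [rho' [u' [Hp [Hrho [Hu [Hode [_ [Hrho_rb [_ Hu_rb]]]]]]]]]] r Hr.
  split; [eapply (background_mach_le gam rb r1 ts p rho u p' rho' u'); eauto|].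
  split; [now destruct (Hode r Hr) as [_ [? _]]|].
  rewrite <- Hrho_rb. eapply (background_density_le gam rb r1 ts p rho u p' rho' u'); eauto.
Qed.

Lemma background_speed_rb gam rb r1 pb rhob ts p rho u :
  background_solution gam rb r1 pb rhob ts p rho u -> u rb = sqrt (ts * csq gam pb rhob).
Proof.
  intros [_ [_ [_ [_ [_ [_ [_ [Hp_rb [Hrho_rb [Hpos Hu_rb]]]]]]]]]].
  rewrite <- Hp_rb, <- Hrho_rb, <- Hu_rb, sqrt_pow2; lra.
Qed.

Section Background_constants.
Variables (gam rb r1 pb rhob ts : R) (p rho u : R -> R).
Hypotheses (Hgam : 0 < gam) (Hrb : 0 < rb) (Hpb : 0 < pb) (Hrhob : 0 < rhob) (Hts : 0 < ts < 1)
  (Hbs : background_solution gam rb r1 pb rhob ts p rho u).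

Let u0 := sqrt (ts * csq gam pb rhob).

Lemma background_u0_sq : u0 ^ 2 = ts * csq gam pb rhob.
Proof.
  unfold u0. rewrite <- Rsqr_pow2, Rsqr_sqrt; auto.
  apply Rmult_le_pos; [lra|]. unfold csq. left. apply Rdiv_lt_0_compat; nra.
Qed.

Lemma mu7_background :
  mu7 gam rb ts p rho u = - (4 * gam * ts * u0 * ((gam - 1) * ts ^ 2 + ts + 1) / (1 - ts) ^ 2).
Proof.
  destruct Hbs as [_ [_ [_ [_ [_ [_ [_ [Hp_rb [Hrho_rb _]]]]]]]]].
  pose proof background_u0_sq as Hu0.
  unfold mu7, mu0, mu6. cbv zeta. rewrite (background_speed_rb _ _ _ _ _ _ _ _ _ Hbs), Hp_rb, Hrho_rb.
  change (sqrt (ts * csq gam pb rhob)) with u0. rewrite Hu0.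
  assert (0 < csq gam pb rhob) by (apply Rdiv_lt_0_compat; nra).
  field. repeat split; try lra; nra.
Qed.

Lemma mu9_background : mu9 gam rb p rho u = - (2 * rb * u0 * (1 + (gam - 1) * ts)).
Proof.
  destruct Hbs as [_ [_ [_ [_ [_ [_ [_ [Hp_rb [Hrho_rb [Hpos _]]]]]]]]]].
  pose proof background_u0_sq as Hu0.
  rewrite (background_speed_rb _ _ _ _ _ _ _ _ _ Hbs) in Hpos.
  unfold mu9, mu0, mu2, mu5. cbv zeta. rewrite (background_speed_rb _ _ _ _ _ _ _ _ _ Hbs), Hp_rb, Hrho_rb.
  change (sqrt (ts * csq gam pb rhob)) with u0 in Hpos |- *.
  apply Rmult_eq_reg_r with u0; [|lra].
  replace (- (2 * rb * u0 * (1 + (gam - 1) * ts)) * u0)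
    with (- (2 * rb * u0 ^ 2 * (1 + (gam - 1) * ts))) by ring.
  rewrite Hu0. unfold csq. field. assert (0 < gam * pb) by nra. repeat split; try lra; intro; nra.
Qed.
End Background_constants.

Lemma Rabs_mult_le a b A B : Rabs a <= A -> Rabs b <= B -> Rabs (a * b) <= A * B.
Proof. intros. rewrite Rabs_mult. apply Rmult_le_compat; auto; apply Rabs_pos. Qed.

Lemma Rpower_pos x y : 0 < Rpower x y.
Proof. apply exp_pos. Qed.

Section Coefficient_bounds.
Variables (gam r : R) (p rho u : R -> R).
Hypotheses (Hgam : 1 < gam) (Ht : 0 <= tfun gam p rho u r <= 1 / 2).

Lemma e1_ge : r ^ 2 / 2 <= e1 gam p rho u r.
Proof. unfold e1. cbv zeta. assert (0 <= r ^ 2) by (rewrite <- Rsqr_pow2; apply Rle_0_sqr). nra. Qed.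

Lemma e2_abs_le r1 : 0 < r <= r1 -> Rabs (e2 gam p rho u r) <= 4 * r1 * (2 * gam + 8).
Proof.
  intros Hr. unfold e2. cbv zeta. set (t := tfun gam p rho u r) in *. apply Rabs_mult_le.
  - rewrite Rabs_right by (left; apply Rdiv_lt_0_compat; lra).
    apply Rmult_le_reg_r with (1 - t); [lra|].
    unfold Rdiv. rewrite Rmult_assoc, Rinv_l by lra. nra.
  - assert (0 <= t ^ 2 <= 1) by nra.
    assert (0 <= (1 + 2 * gam) * t ^ 2 <= 1 + 2 * gam) by (split; nra).
    apply Rabs_le. split; nra.
Qed.

Lemma e3_abs_le : Rabs (e3 gam p rho u r) <= 16 * (42 + 10 * gam + 6 * gam ^ 2).
Proof.
  unfold e3. cbv zeta. set (t := tfun gam p rho u r) in *. apply Rabs_mult_le.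
  - replace (-2 / (t - 1) ^ 3) with (2 / (1 - t) ^ 3) by (field; lra).
    assert (1 / 8 <= (1 - t) ^ 3) by nra.
    rewrite Rabs_right by (left; apply Rdiv_lt_0_compat; lra).
    apply Rmult_le_reg_r with ((1 - t) ^ 3); [lra|].
    unfold Rdiv. rewrite Rmult_assoc, Rinv_l by lra. lra.
  - assert (0 <= t ^ 2 <= 1) by nra. assert (0 <= t ^ 3 <= 1) by nra.
    assert (0 <= t ^ 4 <= 1) by nra.
    apply Rabs_le. split; nra.
Qed.

Lemma e4_abs_le rb ts :
  0 < ts <= 1 / 2 -> 0 < rho rb -> 0 < rho r <= 2 * rho rb ->
  Rabs (e4 gam rb ts p rho u r)
  <= 16 * (2 + gam) * (2 * gam + 14) * Rpower (2 * rho rb) gam / Rpower (rho rb) gam.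
Proof.
  intros Hts Hrhob Hrho. unfold e4. cbv zeta. set (t := tfun gam p rho u r) in *.
  set (rhob := rho rb) in *.
  pose proof (Rpower_pos rhob gam). pose proof (Rpower_pos (rho r) gam).
  pose proof (Rpower_pos (2 * rhob) gam).
  assert (Rpower (rho r) gam <= Rpower (2 * rhob) gam) by (apply Rle_Rpower_l; lra).
  replace (16 * (2 + gam) * (2 * gam + 14) * Rpower (2 * rhob) gam / Rpower rhob gam)
    with (/ Rpower rhob gam * (16 * (2 + gam) * Rpower (2 * rhob) gam * (2 * gam + 14)))
    by (field; lra).
  apply Rabs_mult_le.
  - rewrite Rabs_right by (left; apply Rdiv_lt_0_compat; [lra|]; apply Rmult_lt_0_compat; nra).
    unfold Rdiv. rewrite Rinv_mult, (Rmult_comm (/ _)), <- Rmult_assoc.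
    rewrite <- (Rmult_1_l (/ Rpower rhob gam)) at 2.
    apply Rmult_le_compat_r; [left; apply Rinv_0_lt_compat; lra|].
    apply Rmult_le_reg_r with (1 + (gam - 1) * ts); [nra|].
    rewrite Rmult_assoc, Rinv_l by nra. nra.
  - apply Rabs_mult_le.
    + assert (1 / 8 <= (1 - t) ^ 3) by nra.
      rewrite Rabs_right
        by (left; apply Rdiv_lt_0_compat; [apply Rmult_lt_0_compat; nra|lra]).
      apply Rmult_le_reg_r with ((1 - t) ^ 3); [lra|].
      unfold Rdiv. rewrite Rmult_assoc, Rinv_l by lra.
      assert (0 < 2 + (gam - 1) * t <= 2 + gam) by nra.
      assert (2 * Rpower (rho r) gam * (2 + (gam - 1) * t)
              <= 2 * Rpower (2 * rhob) gam * (2 + gam)) by (apply Rmult_le_compat; nra).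
      assert (0 <= Rpower (2 * rhob) gam * (2 + gam) * ((1 - t) ^ 3 - 1 / 8))
        by (apply Rmult_le_pos; nra).
      nra.
    + assert (0 <= t ^ 2 <= 1) by nra. assert (0 <= gam * t ^ 2 <= gam) by (split; nra).
      apply Rabs_le. split; nra.
Qed.
End Coefficient_bounds.

Lemma second_deriv_abs_le E1 E2 E3 E4 L lm a a1 a2 m B2 B3 B4 :
  0 < L <= 1 -> 0 < m <= E1 -> Rabs E2 <= B2 -> Rabs E3 <= B3 -> Rabs E4 <= B4 -> 0 <= lm ->
  Rabs a <= 3 / 2 -> Rabs a1 <= 1 / 2 ->
  E1 * a2 + L * E2 * a1 + L ^ 2 * (E3 - lm) * a = - L ^ 2 * E4 ->
  Rabs a2 <= L * (2 * (B2 + B3 + B4 + lm) / m).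
Proof.
  intros HL Hm HE2 HE3 HE4 Hlm Ha Ha1 Heq.
  pose proof (Rabs_pos E2). pose proof (Rabs_pos E3). pose proof (Rabs_pos E4).
  assert (HL2 : 0 < L ^ 2 <= L) by (split; nra).
  assert (Hterm1 : Rabs (L ^ 2 * E4) <= L * B4).
  { rewrite Rabs_mult, (Rabs_right (L ^ 2)) by lra. nra. }
  assert (Hterm2 : Rabs (L * E2 * a1) <= L * B2 * (1 / 2)).
  { apply Rabs_mult_le; auto. rewrite Rabs_mult, (Rabs_right L) by lra.
    apply Rmult_le_compat_l; lra. }
  assert (Hterm3 : Rabs (L ^ 2 * (E3 - lm) * a) <= L * (B3 + lm) * (3 / 2)).
  { apply Rabs_mult_le; auto. rewrite Rabs_mult, (Rabs_right (L ^ 2)) by lra.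
    assert (Rabs (E3 - lm) <= B3 + lm)
      by (unfold Rminus; eapply Rle_trans; [apply Rabs_triang|];
          rewrite Rabs_Ropp, (Rabs_right lm); lra).
    apply Rmult_le_compat; try lra; apply Rabs_pos. }
  assert (Hsum : E1 * Rabs a2 <= L * (2 * (B2 + B3 + B4 + lm))).
  { rewrite <- (Rabs_right E1), <- Rabs_mult by lra.
    replace (E1 * a2) with (- (L ^ 2 * E4) + - (L * E2 * a1) + - (L ^ 2 * (E3 - lm) * a)) by lra.
    eapply Rle_trans; [apply Rabs_triang|].
    eapply Rle_trans; [apply Rplus_le_compat_r, Rabs_triang|].
    rewrite !Rabs_Ropp. nra. }
  apply Rmult_le_reg_l with m; [lra|].
  replace (m * (L * (2 * (B2 + B3 + B4 + lm) / m))) with (L * (2 * (B2 + B3 + B4 + lm)))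
    by (field; lra).
  pose proof (Rabs_pos a2). nra.
Qed.

Section Boundary_value_problem.
Variables (E1 E2 E3 E4 v v1 v2 : R -> R) (L lm : R).
Hypotheses (HL : 0 < L) (Hv : deriv_on 0 1 v v1) (Hv1 : deriv_on 0 1 v1 v2)
  (Heq : forall y, 0 <= y <= 1 ->
     E1 y * v2 y + L * E2 y * v1 y + L ^ 2 * (E3 y - lm) * v y = - L ^ 2 * E4 y)
  (Hv0 : v 0 = 1).

Lemma large_eigenvalue_slope_pos B3 B4 :
  (forall y, 0 <= y <= 1 -> 0 < E1 y /\ Rabs (E3 y) <= B3 /\ Rabs (E4 y) <= B4) ->
  B3 + B4 < lm -> 0 < v1 0 -> forall y, 0 <= y <= 1 -> 0 < v1 y.
Proof.
  intros Hco Hlm Hslope y Hy. destruct (Rlt_or_le 0 (v1 y)) as [|Hle]; auto. exfalso.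
  destruct (cont_on_first_hit 0 1 (fun y => - v1 y) 0 ltac:(lra)
    (cont_on_opp _ _ _ (deriv_on_cont _ _ _ _ Hv1)) ltac:(lra)) as [c [Hc [Hzero Hbefore]]].
  { exists y; split; auto; lra. }
  assert (Hvc : 1 <= v c).
  { enough (0 * (c - 0) <= v c - v 0) by lra.
    apply (mean_value_lb 0 c v v1); [apply (deriv_on_restrict 0 1); auto; lra| |lra].
    intros x Hx. destruct (Req_dec x c) as [->|]; [lra|].
    specialize (Hbefore x ltac:(lra)). lra. }
  assert (Hv2c : v2 c <= 0).
  { assert (Hopp : deriv_on 0 1 (fun y => 0 + -1 * v1 y) (fun y => 0 + -1 * v2 y))
      by (apply deriv_on_plus_scal; auto; apply deriv_on_const).
    pose proof (deriv_on_nonneg_at_left_max 0 1 _ _ c Hopp Hc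
      ltac:(intros s Hs; specialize (Hbefore s Hs); lra)). lra. }
  destruct (Hco c ltac:(lra)) as [HE1 [HE3 HE4]].
  apply Rabs_le_between in HE3, HE4.
  specialize (Heq c ltac:(lra)). replace (v1 c) with 0 in Heq by lra.
  assert (E1 c * v2 c <= 0) by nra.
  assert ((E3 c - lm) * v c < - E4 c) by nra.
  assert (L ^ 2 * ((E3 c - lm) * v c) < L ^ 2 * (- E4 c)) by (apply Rmult_lt_compat_l; nra).
  nra.
Qed.

Lemma no_solution_large_eigenvalue B3 B4 :
  (forall y, 0 <= y <= 1 -> 0 < E1 y /\ Rabs (E3 y) <= B3 /\ Rabs (E4 y) <= B4) ->
  B3 + B4 < lm -> 0 < v1 0 -> v 1 <> 0.
Proof.
  intros Hco Hlm Hslope Hv1end.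
  enough (0 * (1 - 0) <= v 1 - v 0) by lra.
  apply (mean_value_lb 0 1 v v1); auto; [|lra].
  intros x Hx. left. apply (large_eigenvalue_slope_pos B3 B4); auto.
Qed.

Lemma small_eigenvalue_slope_small m B2 B3 B4 :
  L <= 1 -> 0 < m -> 0 <= lm ->
  (forall y, 0 <= y <= 1 ->
     m <= E1 y /\ Rabs (E2 y) <= B2 /\ Rabs (E3 y) <= B3 /\ Rabs (E4 y) <= B4) ->
  L * (2 * (B2 + B3 + B4 + lm) / m) + Rabs (v1 0) < 1 / 2 ->
  forall y, 0 <= y <= 1 -> Rabs (v1 y) < 1 / 2.
Proof.
  intros HL1 Hm Hlm Hco Hsmall y Hy.
  set (K := 2 * (B2 + B3 + B4 + lm) / m) in *.
  assert (HK : 0 <= K).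
  { destruct (Hco 0 ltac:(lra)) as [_ [HE2 [HE3 HE4]]].
    pose proof (Rabs_pos (E2 0)). pose proof (Rabs_pos (E3 0)). pose proof (Rabs_pos (E4 0)).
    unfold K, Rdiv. apply Rmult_le_pos; [lra|]. left; apply Rinv_0_lt_compat; lra. }
  destruct (Rlt_or_le (Rabs (v1 y)) (1 / 2)) as [|Hge]; auto. exfalso.
  destruct (cont_on_first_hit 0 1 (fun y => Rabs (v1 y)) (1 / 2) ltac:(lra)
    (cont_on_abs _ _ _ (deriv_on_cont _ _ _ _ Hv1)) ltac:(cbv beta; nra))
    as [c [Hc [Hhit Hbefore]]].
  { exists y; split; auto. }
  assert (Hv1x : forall x, 0 <= x <= c -> Rabs (v1 x) <= 1 / 2).
  { intros x Hx. destruct (Req_dec x c) as [->|]; [lra|]. left; apply Hbefore; lra. }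
  assert (Hvx : forall x, 0 <= x <= c -> Rabs (v x) <= 3 / 2).
  { intros x Hx.
    pose proof (mean_value_abs 0 c v v1 (1 / 2) ltac:(apply (deriv_on_restrict 0 1); auto; lra)
      Hv1x x Hx) as Hmv.
    apply Rabs_le_between in Hmv. apply Rabs_le. lra. }
  assert (Hv2x : forall x, 0 <= x <= c -> Rabs (v2 x) <= L * K).
  { intros x Hx. destruct (Hco x ltac:(lra)) as [HE1 [HE2 [HE3 HE4]]].
    apply (second_deriv_abs_le (E1 x) (E2 x) (E3 x) (E4 x) L lm (v x) (v1 x)); auto.
    apply Heq; lra. }
  pose proof (mean_value_abs 0 c v1 v2 (L * K) ltac:(apply (deriv_on_restrict 0 1); auto; lra)
    Hv2x c ltac:(lra)) as Hmv.
  assert (L * K * (c - 0) <= L * K) by (assert (0 <= L * K) by nra; nra).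
  pose proof (Rabs_triang_inv (v1 c) (v1 0)). cbv beta in Hhit. lra.
Qed.

Lemma no_solution_small_eigenvalue m B2 B3 B4 :
  L <= 1 -> 0 < m -> 0 <= lm ->
  (forall y, 0 <= y <= 1 ->
     m <= E1 y /\ Rabs (E2 y) <= B2 /\ Rabs (E3 y) <= B3 /\ Rabs (E4 y) <= B4) ->
  L * (2 * (B2 + B3 + B4 + lm) / m) + Rabs (v1 0) < 1 / 2 -> v 1 <> 0.
Proof.
  intros HL1 Hm Hlm Hco Hsmall Hv1end.
  pose proof (mean_value_abs 0 1 v v1 (1 / 2) Hv
    ltac:(intros x Hx; left; apply (small_eigenvalue_slope_small m B2 B3 B4); auto)
    1 ltac:(lra)) as Hmv.
  apply Rabs_le_between in Hmv. lra.
Qed.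
End Boundary_value_problem.

Lemma Rabs_div_mult_le x D D0 L N :
  0 < D0 <= D -> 0 <= L -> Rabs x <= N -> Rabs (x / D * L) <= N / D0 * L.
Proof.
  intros HD HL Hx. rewrite Rabs_mult, (Rabs_right L) by lra.
  apply Rmult_le_compat_r; auto. unfold Rdiv. rewrite Rabs_mult, Rabs_inv.
  rewrite (Rabs_right D) by lra.
  apply Rmult_le_compat; auto; try apply Rabs_pos.
  - left; apply Rinv_0_lt_compat; lra.
  - apply Rinv_le_contravar; lra.
Qed.

Lemma mult_lt_half_of_lt_inv x c : 0 <= x < / (2 * Rabs c + 1) -> x * c < 1 / 2.
Proof.
  intros Hx. pose proof (Rabs_pos c). pose proof (Rle_abs c).
  assert (x * (2 * Rabs c + 1) < 1).
  { apply Rmult_lt_reg_r with (/ (2 * Rabs c + 1)); [apply Rinv_0_lt_compat; lra|].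
    rewrite Rmult_assoc, Rinv_r, Rmult_1_r, Rmult_1_l by lra. lra. }
  nra.
Qed.

Section Short_interval.
Variables (r0 r1 gam pb rhob ts : R).
Hypotheses (Hr : 0 < r0 < r1) (Hgam : 1 < gam) (Hpb : 0 < pb) (Hrhob : 0 < rhob)
  (Hts : 0 < ts <= 1 / 2).

Let u0 := sqrt (ts * csq gam pb rhob).
(* [mu7 = - M] for every admissible [rb] *)
Let M := 4 * gam * ts * u0 * ((gam - 1) * ts ^ 2 + ts + 1) / (1 - ts) ^ 2.
Let B2 := 4 * r1 * (2 * gam + 8).
Let B3 := 16 * (42 + 10 * gam + 6 * gam ^ 2).
Let B4 := 16 * (2 + gam) * (2 * gam + 14) * Rpower (2 * rhob) gam / Rpower rhob gam.
Let Lam := B3 + B4 + M + 1.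
Let C := 2 * (B2 + B3 + B4 + Lam) / (r0 ^ 2 / 2) + (Lam + M) / (2 * r0 * u0).

Lemma background_coefficient_bounds rb p rho u :
  r0 <= rb < r1 -> r1 - rb < r0 / 4 -> background_solution gam rb r1 pb rhob ts p rho u ->
  forall y, 0 <= y <= 1 ->
    let r := (r1 - rb) * y + rb in
    r0 ^ 2 / 2 <= e1 gam p rho u r /\ Rabs (e2 gam p rho u r) <= B2 /\
    Rabs (e3 gam p rho u r) <= B3 /\ Rabs (e4 gam rb ts p rho u r) <= B4.
Proof.
  intros Hrb HL Hbs y Hy r.
  assert (Hr_range : rb <= r <= r1) by (unfold r; nra).
  destruct (background_estimates gam rb r1 pb rhob ts p rho u ltac:(lra) ltac:(lra) ltac:(lra)
    ltac:(lra) Hbs r Hr_range) as [Ht Hrho].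
  assert (Hrho_rb : rho rb = rhob) by (destruct Hbs as [_ [_ [_ [_ [_ [_ [_ [_ [? _]]]]]]]]]; auto).
  assert (Ht' : 0 <= tfun gam p rho u r <= 1 / 2) by lra.
  repeat split.
  - eapply Rle_trans; [|apply e1_ge; lra].
    apply Rmult_le_compat_r; [lra|]. apply pow_incr; lra.
  - apply e2_abs_le; auto; lra.
  - apply e3_abs_le; auto.
  - unfold B4. rewrite <- Hrho_rb. apply e4_abs_le; auto; lra.
Qed.

Lemma S_condition_of_short_interval rb p rho u :
  r0 <= rb < r1 -> r1 - rb < r0 / 4 -> r1 - rb <= 1 -> (r1 - rb) * C < 1 / 2 ->
  background_solution gam rb r1 pb rhob ts p rho u -> S_condition gam rb r1 ts p rho u.
Proof.
  intros Hrb HL4 HL1 HLC Hbs. unfold S_condition. cbv zeta.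
  intros n [v [v1 [v2 [Hv [Hv1 [Heq [Hv0 [Hv1end Hslope]]]]]]]].
  pose proof (background_coefficient_bounds rb p rho u Hrb HL4 Hbs) as Hco. cbv zeta in Hco.
  set (L := r1 - rb) in *.
  assert (HL : 0 < L) by (unfold L; lra).
  assert (Hu0 : 0 < u0).
  { apply sqrt_lt_R0, Rmult_lt_0_compat; [lra|]. apply Rdiv_lt_0_compat; nra. }
  assert (HM : 0 <= M).
  { unfold M, Rdiv. apply Rmult_le_pos; [|left; apply Rinv_0_lt_compat; nra].
    assert (0 <= 4 * gam * ts * u0) by (repeat apply Rmult_le_pos; lra).
    apply Rmult_le_pos; nra. }
  assert (Hden : 2 * r0 * u0 <= 2 * rb * u0 * (1 + (gam - 1) * ts)).
  { assert (0 <= (gam - 1) * ts) by nra.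
    assert (r0 <= rb * (1 + (gam - 1) * ts)) by nra. nra. }
  rewrite (mu7_background gam rb r1 pb rhob ts p rho u), (mu9_background gam rb r1 pb rhob ts p rho u)
    in Hslope by (auto; lra).
  change (sqrt (ts * csq gam pb rhob)) with u0 in Hslope. fold M in Hslope.
  replace (- ((lam n + - M) / - (2 * rb * u0 * (1 + (gam - 1) * ts))) * L)
    with ((lam n - M) / (2 * rb * u0 * (1 + (gam - 1) * ts)) * L) in Hslope
    by (field; nra).
  assert (Hlam : 0 <= lam n) by (unfold lam; pose proof (pos_INR n); nra).
  destruct (Rle_or_lt Lam (lam n)) as [Hlarge|Hsmall].
  - apply (no_solution_large_eigenvalue
      (fun y => e1 gam p rho u (L * y + rb)) (fun y => e2 gam p rho u (L * y + rb))
      (fun y => e3 gam p rho u (L * y + rb)) (fun y => e4 gam rb ts p rho u (L * y + rb))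
      v v1 v2 L (lam n)) with (B3 := B3) (B4 := B4); auto.
    + intros y Hy. destruct (Hco y Hy) as [HE1 [_ [HE3 HE4]]]. repeat split; auto. nra.
    + unfold Lam in Hlarge. lra.
    + destruct (Hco 0 ltac:(lra)) as [_ [_ [HE3 HE4]]].
      pose proof (Rabs_pos (e3 gam p rho u (L * 0 + rb))).
      pose proof (Rabs_pos (e4 gam rb ts p rho u (L * 0 + rb))).
      rewrite Hslope. apply Rmult_lt_0_compat; [apply Rdiv_lt_0_compat|]; unfold Lam in Hlarge; nra.
  - apply (no_solution_small_eigenvalue
      (fun y => e1 gam p rho u (L * y + rb)) (fun y => e2 gam p rho u (L * y + rb))
      (fun y => e3 gam p rho u (L * y + rb)) (fun y => e4 gam rb ts p rho u (L * y + rb))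
      v v1 v2 L (lam n)) with (m := r0 ^ 2 / 2) (B2 := B2) (B3 := B3) (B4 := B4); auto.
    + nra.
    + assert (Hv10 : Rabs (v1 0) <= (Lam + M) / (2 * r0 * u0) * L).
      { rewrite Hslope. apply Rabs_div_mult_le; [split; nra|lra|]. apply Rabs_le; lra. }
      set (X := B2 + B3 + B4) in *.
      assert (2 * (X + lam n) / (r0 ^ 2 / 2) <= 2 * (X + Lam) / (r0 ^ 2 / 2)).
      { unfold Rdiv. apply Rmult_le_compat_r; [left; apply Rinv_0_lt_compat; nra|lra]. }
      assert (L * (2 * (X + lam n) / (r0 ^ 2 / 2)) <= L * (2 * (X + Lam) / (r0 ^ 2 / 2)))
        by (apply Rmult_le_compat_l; lra).
      unfold C in HLC. replace (B2 + B3 + B4 + Lam) with (X + Lam) in HLC by (unfold X; ring).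
      replace (B2 + B3 + B4 + lam n) with (X + lam n) by (unfold X; ring).
      lra.
Qed.
Lemma S_condition_near_r1 :
  exists delta, 0 < delta /\
    forall rb, r0 <= rb < r1 -> r1 - rb < delta ->
      forall p rho u, background_solution gam rb r1 pb rhob ts p rho u ->
        S_condition gam rb r1 ts p rho u.
Proof.
  set (eta := / (2 * Rabs C + 1)).
  assert (Heta : 0 < eta) by (apply Rinv_0_lt_compat; pose proof (Rabs_pos C); lra).
  exists (Rmin (r0 / 4) (Rmin 1 eta)). split.
  { apply Rmin_glb_lt; [lra|]. apply Rmin_glb_lt; lra. }
  intros rb Hrb HL p rho u Hbs.
  pose proof (Rmin_l (r0 / 4) (Rmin 1 eta)). pose proof (Rmin_r (r0 / 4) (Rmin 1 eta)).
  pose proof (Rmin_l 1 eta). pose proof (Rmin_r 1 eta).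
  apply S_condition_of_short_interval; auto; try lra.
  apply mult_lt_half_of_lt_inv. fold eta. lra.
Qed.
End Short_interval.

Theorem lemma2p7 :
  forall r0 r1 : R, 0 < r0 < r1 ->
  exists sigma0 : R, 0 < sigma0 < 1 /\
    forall gam pb rhob ts : R,
      1 < gam -> 0 < pb -> 0 < rhob -> 0 < ts < sigma0 ->
      exists rstar : R, r0 < rstar < r1 /\
        forall rb : R, rstar < rb < r1 ->
          forall p rho u : R -> R,
            background_solution gam rb r1 pb rhob ts p rho u ->
            S_condition gam rb r1 ts p rho u.
Proof.
  intros r0 r1 Hr. exists (1 / 2). split; [lra|].
  intros gam pb rhob ts Hgam Hpb Hrhob Hts.
  destruct (S_condition_near_r1 r0 r1 gam pb rhob ts Hr Hgam Hpb Hrhob ltac:(lra))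
    as [delta [Hdelta HS]].
  exists (Rmax ((r0 + r1) / 2) (r1 - delta)).
  pose proof (Rmax_l ((r0 + r1) / 2) (r1 - delta)).
  pose proof (Rmax_r ((r0 + r1) / 2) (r1 - delta)).
  split.
  - split; [lra|]. apply Rmax_lub_lt; lra.
  - intros rb Hrb. apply HS; lra.
Qed.
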